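(* Let $G$ be a finite group and $p$ a fixed prime divisor of $|G|$. Then every self-centralizing non-nilpotent subgroup of $G$ is a TI-subgroup of $G$ or subnormal in $G$ or has $p'$-order if and only if every non-nilpotent subgroup of $G$ is a TI-subgroup of $G$ or subnormal in $G$ or has $p'$-order.
   Context: All groups are finite. A subgroup $H$ of a group $G$ is a TI-subgroup of $G$ if for every $g\in G$, $H^g\cap H=1$ or $H^g\cap H=H$. A subgroup $H$ of $G$ is self-centralizing in $G$ if $C_G(H)\leq H$. A subgroup has $p'$-order if its order is not divisible by $p$. *)

From mathcomp Require Import all_boot all_fingroup all_solvable.
Set Implicit Arguments.
Unset Strict Implicit.
Unset Printing Implicit Defensive.
Local Open Scope group_scope.

Definition TI_subgroup (gT : finGroupType) (H G : {set gT}) : Prop :=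
  forall g, g \in G -> (H :^ g :&: H = 1) \/ (H :^ g :&: H = H).

Definition self_centralizing (gT : finGroupType) (H G : {set gT}) : Prop :=
  'C_G(H) \subset H.

Definition TI_sn_or_pprime (gT : finGroupType) (p : nat) (H G : {group gT}) : Prop :=
  TI_subgroup H G \/ H <|<| G \/ ~~ (p %| #|H|).

(* Let H <= G be non-nilpotent, not subnormal, with p | #|H|; we show H is a
   TI-subgroup. Any self-centralizing overgroup X of H in which H is subnormal
   inherits these three properties, so the hypothesis makes X a TI-subgroup.
   Taking X = T maximal among the subgroups containing C_G(H) in which H is
   subnormal gives a self-normalizing TI-subgroup, i.e. a Frobenius complement
   in G; hence all abelian subgroups of T are cyclic. Taking X = L = H A with A
   a maximal abelian subgroup of C_G(H) gives a TI-subgroup L <= T in which A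
   is central. If H^g :&: H <> 1 then g normalizes L, and the cyclicity of the
   abelian subgroups of L forces H^g = H. *)
From mathcomp Require Import all_boot all_fingroup all_solvable.
From mathcomp Require Import mxrepresentation mxabelem vcharacter.
Set Implicit Arguments.
Unset Strict Implicit.
Unset Printing Implicit Defensive.
Local Open Scope group_scope.

Lemma semiregular_abelian_cyclic (gT : finGroupType) (K E : {group gT}) :
  K :!=: 1 -> E \subset 'N(K) -> coprime #|K| #|E| -> semiregular K E ->
  abelian E -> cyclic E.
Proof.
move=> ntK nKE coKE regE cEE.
pose q := pdiv #|K|.
have q_pr : prime q by rewrite pdiv_prime // cardG_gt1.
have [Q sylQ nQE] := sol_coprime_Sylow_exists q (abelian_sol cEE) nKE coKE.
have [sQK qQ _] := and3P sylQ.
have ntQ : Q :!=: 1.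
  by rewrite -cardG_gt1 (card_Hall sylQ) p_part_gt1 /q pi_pdiv cardG_gt1.
(* E acts irreducibly on a minimal E-invariant subgroup W of Ohm_1(Z(Q)), and
   faithfully by regularity; an abelian group with a faithful irreducible
   representation is cyclic. *)
pose V := 'Ohm_1('Z(Q)).
have abelV : q.-abelem V.
  exact: Ohm1_abelem (pgroupS (center_sub Q) qQ) (center_abelian Q).
have ntV : V :!=: 1 by rewrite Ohm1_eq1 center_nil_eq1 ?(pgroup_nil qQ).
have nVE : E \subset 'N(V).
  exact: char_norm_trans (gFchar_trans _ (center_char Q)) nQE.
have [W minW sWV] := minnormal_exists ntV nVE.
have [/andP[ntW nWE] _] := mingroupP minW.
have sWK : W \subset K.
  exact: subset_trans sWV (subset_trans (Ohm_sub 1 _) (subset_trans (center_sub Q) sQK)).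
have cycEW : cyclic (E / 'C_E(W)).
  have irrW := abelem_mx_irrP (abelemS sWV abelV) ntW nWE.
  have := center_kquo_cyclic (irrW minW).
  by rewrite rker_abelem (center_idP (quotient_abelian _ cEE)).
have CEW1 : 'C_E(W) = 1.
  apply/trivgP/subsetP => e /setIP[Ee cWe]; rewrite inE; apply: contraT => nte.
  have : W \subset 'C_K[e] by rewrite subsetI sWK sub_cent1 (subsetP _ e cWe) // centsC.
  by rewrite regE ?inE ?nte // subG1 (negPf ntW).
by rewrite CEW1 in cycEW; rewrite (isog_cyclic (quotient1_isog E)).
Qed.

Lemma Frobenius_compl_abelian_cyclic (gT : finGroupType) (G T E : {group gT}) :
  [Frobenius G with complement T] -> E \subset T -> abelian E -> cyclic E.
Proof.
move=> frobT sET cEE.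
(* Frobenius' theorem, proved with characters. *)
have [K frobK] := Frobenius_kernel_exists frobT.
have [defG ntK _ _ _] := Frobenius_context frobK.
have [_ _ nKT _] := sdprodP defG.
apply: (semiregular_abelian_cyclic ntK) => //.
- exact: subset_trans sET nKT.
- exact: coprime_dvdr (cardSg sET) (Frobenius_coprime frobK).
- exact: semiregularS (subxx K) sET (Frobenius_reg_ker frobK).
Qed.

Lemma TI_subgroup_norm (gT : finGroupType) (T G : {group gT}) g :
  TI_subgroup T G -> g \in G -> T :^ g :&: T != 1 -> g \in 'N(T).
Proof.
move=> tiT Gg; case: (tiT g Gg) => [-> | /setIidPr sTTg]; first by rewrite eqxx.
by move=> _; apply/normP/eqP; rewrite eq_sym eqEcard sTTg cardJg leqnn.
Qed.

Lemma TI_selfnorm_Frobenius (gT : finGroupType) (T G : {group gT}) :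
  T \subset G -> T != G :> {set gT} -> T :!=: 1 ->
  TI_subgroup T G -> 'N_G(T) = T -> [Frobenius G with complement T].
Proof.
move=> sTG neTG ntT tiT nTT; apply/andP; split=> //.
apply/normedTI_P; split.
- by rewrite setD_eq0 subG1.
- by rewrite subsetI sTG normD1 normG.
move=> g Gg; rewrite -setI_eq0 => /set0Pn[y /setIP[]].
rewrite conjD1g 2!inE => /andP[nty Tgy] /setD1P[_ Ty].
rewrite -nTT inE Gg; apply: TI_subgroup_norm tiT Gg _.
apply/trivgPn; exists y => //; exact/setIP.
Qed.

Lemma eq_subG_cyclic_mul (gT : finGroupType) (X M1 M2 B : {group gT}) :
  cyclic X -> M1 \subset X -> M2 \subset X ->
  M1 * B = X -> M2 * B = X -> M1 :&: B = M2 :&: B -> M1 :=: M2.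
Proof.
move=> cycX sM1X sM2X defX1 defX2 eqM12B.
have eq_card : #|M1| = #|M2|.
  by apply/eqP; rewrite -(eqn_pmul2r (cardG_gt0 B)) !mul_cardG defX1 defX2 eqM12B.
by apply/eqP; rewrite (eq_subG_cyclic cycX) // eq_card.
Qed.

Lemma centerJ (gT : finGroupType) (K : {set gT}) g : 'Z(K :^ g) = 'Z(K) :^ g.
Proof. by rewrite /center conjIg centJ. Qed.

Lemma centralizing_capZ (gT : finGroupType) (A K : {set gT}) :
  A \subset 'C(K) -> A :&: K = A :&: 'Z(K).
Proof. by move=> cKA; rewrite /center setIA; apply/esym/setIidPl; rewrite subIset ?cKA. Qed.

Section CentralProductConjugate.

Variables (gT : finGroupType) (L H A : {group gT}) (g : gT).
Hypotheses (defL : H * A = L) (cAL : A \subset 'C(L)).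
Hypotheses (nLg : g \in 'N(L)) (sHgL : H :^ g \subset L).
Hypothesis cycL : forall X : {group gT}, X \subset L -> abelian X -> cyclic X.

Let sHL : H \subset L. Proof. by rewrite -defL mulG_subl. Qed.
Let sAL : A \subset L. Proof. by rewrite -defL mulG_subr. Qed.
Let cHA : A \subset 'C(H). Proof. exact: subset_trans cAL (centS sHL). Qed.

Lemma central_product_centerJ : 'Z(H) :^ g = 'Z(H).
Proof.
have sZHZL : 'Z(H) \subset 'Z(L).
  rewrite subsetI (subset_trans (center_sub H) sHL) -defL centM subsetI subsetIr.
  by rewrite (subset_trans (center_sub H)) // centsC.
have cycZL : cyclic 'Z(L) := cycL (center_sub L) (center_abelian L).
apply/eqP; rewrite (eq_subG_cyclic cycZL) ?cardJg //.
by rewrite /= -(normP nLg) centerJ conjSg.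
Qed.

Lemma central_product_conj_sub : H :^ g \subset H.
Proof.
have capAHg : A :&: H :^ g = A :&: H.
  rewrite centralizing_capZ ?(subset_trans cAL (centS sHgL)) //.
  by rewrite centerJ central_product_centerJ -centralizing_capZ.
apply/subsetP => x Hgx.
have /mulsgP[h a Hh Aa defx] : x \in H * A by rewrite defL (subsetP sHgL).
pose X := (<[h]> <*> <[a]>)%G.
have cXX : abelian X.
  rewrite abelianY !cycle_abelian /= cent_cycle cycle_subG.
  by apply/cent1P; exact: (centP (subsetP cHA a Aa)) h Hh.
have cycX : cyclic X.
  by apply: cycL cXX; rewrite join_subG !cycle_subG (subsetP sHL) ?(subsetP sAL).
have Xh : h \in X by rewrite (subsetP (joing_subl _ _)) ?cycle_id.
have Xa : a \in X by rewrite (subsetP (joing_subr _ _)) ?cycle_id.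
have Xx : x \in X by rewrite defx groupM.
pose B := (X :&: A)%G.
have Ba : a \in B by rewrite inE Xa.
(* X :&: H and X :&: H^g have the same product and the same intersection with
   B, so they have the same order in the cyclic group X. *)
have mulBX (M : {group gT}) : M \subset X -> h \in M * B -> M * B = X.
  move=> sMX hMB.
  have cMB : B \subset 'C(M) by apply: sub_abelian_cent2 cXX (subsetIl _ _) sMX.
  rewrite -(cent_joinEr cMB) in hMB *; apply/eqP.
  rewrite eqEsubset join_subG sMX subsetIl join_subG !cycle_subG hMB /=.
  by rewrite (subsetP (joing_subr _ _)).
have defXH : (X :&: H)%G * B = X.
  apply: mulBX; first exact: subsetIl.
  by rewrite -(mulg1 h) mem_mulg // inE Xh.
have defXHg : (X :&: H :^ g)%G * B = X.
  apply: mulBX; first exact: subsetIl.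
  by rewrite -(mulgK a h) -defx mem_mulg ?groupV // inE Xx Hgx.
have eqXH : X :&: H = X :&: H :^ g.
  apply: eq_subG_cyclic_mul defXH defXHg _; rewrite ?subsetIl //=.
  by rewrite -!setIIr [H :&: A]setIC [H :^ g :&: A]setIC capAHg.
have : x \in X :&: H :^ g by rewrite inE Xx Hgx.
by rewrite -eqXH => /setIP[].
Qed.

End CentralProductConjugate.

Lemma max_abelian_cent_selfcent (gT : finGroupType) (G H A : {group gT}) :
  maxgroup A (fun B : {group gT} => (B \subset 'C_G(H)) && abelian B) ->
  self_centralizing (H <*> A) G.
Proof.
move=> maxA; have /andP[sAC cAA] := maxgroupp maxA.
apply/subsetP => y /setIP[Gy]; rewrite centY inE => /andP[cHy cAy].
have sYC : A <*> <[y]> \subset 'C_G(H).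
  by rewrite join_subG sAC cycle_subG inE Gy.
have cYY : abelian (A <*> <[y]>).
  by rewrite abelianY cAA cycle_abelian cycle_subG.
have defY : A <*> <[y]> :=: A.
  by apply: (maxgroupP maxA).2 (joing_subl _ _); rewrite sYC.
have : y \in A <*> <[y]> by rewrite (subsetP (joing_subr _ _)) ?cycle_id.
by rewrite defY => /(subsetP (joing_subr H A)).
Qed.

Section NonNilpotentSubgroupTI.

Variables (gT : finGroupType) (G : {group gT}) (p : nat).
Hypothesis selfcent_TI_sn_or_pprime : forall H : {group gT},
  H \subset G -> self_centralizing H G -> ~~ nilpotent H -> TI_sn_or_pprime p H G.
Variable H : {group gT}.
Hypotheses (sHG : H \subset G) (nnilH : ~~ nilpotent H).
Hypotheses (nsnH : ~~ (H <|<| G)) (pH : p %| #|H|).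

Lemma subnormal_overgroup_TI (X : {group gT}) :
  X \subset G -> self_centralizing X G -> H <|<| X -> TI_subgroup X G.
Proof.
move=> sXG cX snHX; have sHX := subnormal_sub snHX.
have nnilX : ~~ nilpotent X by apply: contra nnilH => /(nilpotentS sHX).
case: (selfcent_TI_sn_or_pprime sXG cX nnilX) => [// | [snXG | npX]].
- by case/negP: nsnH; apply: subnormal_trans snHX snXG.
- by case/negP: npX; apply: dvdn_trans pH (cardSg sHX).
Qed.

Lemma Frobenius_compl_over_cent :
  exists T : {group gT},
    [/\ [Frobenius G with complement T], H \subset T & 'C_G(H) \subset T].
Proof.
pose P (X : {group gT}) := [&& 'C_G(H) \subset X, X \subset G & H <|<| X].
have [T maxT] : {T : {group gT} | maxgroup T P}.
  apply: ex_maxgroup; exists 'N_G(H)%G; apply/and3P; split.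
  - exact: setIS G (cent_sub H).
  - exact: subsetIl.
  - exact: normal_subnormal (normalSG sHG).
have /and3P[sCT sTG snHT] := maxgroupp maxT.
have sHT : H \subset T := subnormal_sub snHT.
exists T; split=> //; apply: TI_selfnorm_Frobenius => //.
- by apply: contra nsnH => /eqP <-.
- by apply: contra nnilH => /eqP T1; rewrite (nilpotentS sHT) // T1 nilpotent1.
- apply: subnormal_overgroup_TI => //.
  exact: subset_trans (setIS G (centS sHT)) sCT.
apply: (maxgroupP maxT).2; last by rewrite subsetI sTG normG.
apply/and3P; split; last exact: subnormal_trans snHT (normal_subnormal (normalSG sTG)).
- by apply: subset_trans sCT _; rewrite subsetI sTG normG.
- exact: subsetIl.
Qed.

Lemma nonnilpotent_TI : TI_subgroup H G.
Proof.
move=> g Gg; have [HgH1 | ntHgH] := eqVneq (H :^ g :&: H) 1; [by left | right].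
have [T [frobT sHT sCT]] := Frobenius_compl_over_cent.
pose PA (B : {group gT}) := (B \subset 'C_G(H)) && abelian B.
have [A maxA] : {A : {group gT} | maxgroup A PA}.
  by apply: ex_maxgroup; exists 1%G; rewrite /PA sub1G abelian1.
have /andP[sAC cAA] := maxgroupp maxA.
have cHA : A \subset 'C(H) := subset_trans sAC (subsetIr _ _).
pose L := (H <*> A)%G.
have sLG : L \subset G by rewrite join_subG sHG (subset_trans sAC (subsetIl _ _)).
have sLT : L \subset T by rewrite join_subG sHT (subset_trans sAC sCT).
have nsHL : H <| L.
  by rewrite /normal joing_subl join_subG normG (subset_trans cHA (cent_sub H)).
have tiL : TI_subgroup L G.
  exact: subnormal_overgroup_TI sLG (max_abelian_cent_selfcent maxA) (normal_subnormal nsHL).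
have nLg : g \in 'N(L).
  apply: TI_subgroup_norm tiL Gg _; apply: contra ntHgH => /eqP LgL1.
  by apply/eqP/trivgP; rewrite -LgL1 setISS ?conjSg ?joing_subl.
have sHgL : H :^ g \subset L by rewrite -(normP nLg) conjSg joing_subl.
have sHgH : H :^ g \subset H.
  apply: (@central_product_conj_sub _ L H A g _ _ nLg sHgL).
  - by rewrite /= cent_joinEr.
  - by rewrite /= centY subsetI cHA.
  - by move=> X sXL; apply: Frobenius_compl_abelian_cyclic frobT (subset_trans sXL sLT).
suff -> : H :^ g = H by rewrite setIid.
by apply/eqP; rewrite eqEcard sHgH cardJg leqnn.
Qed.

End NonNilpotentSubgroupTI.

Theorem theorem1p6 (gT : finGroupType) (G : {group gT}) (p : nat) :
  prime p -> p %| #|G| ->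
  ((forall H : {group gT}, H \subset G -> self_centralizing H G ->
       ~~ nilpotent H -> TI_sn_or_pprime p H G)
   <->
   (forall H : {group gT}, H \subset G ->
       ~~ nilpotent H -> TI_sn_or_pprime p H G)).
Proof.
move=> _ _; split=> [hyp H sHG nnilH | hyp H sHG _]; last exact: hyp.
have [snH | nsnH] := boolP (H <|<| G); first by right; left.
have [pH | npH] := boolP (p %| #|H|); last by right; right.
by left; apply: nonnilpotent_TI hyp H sHG nnilH nsnH pH.
Qed.
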